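(* Let $a\in[0,1)$, let $\{v_n\}_{n=1}^\infty\subset\mathbb{C}$ and $V=\mathrm{diag}(v_1,v_2,\dots)$. Let $K'$ be the semi-infinite matrix with entries $K'_{m,n}:=\sqrt{|v_m|}\big[\frac{a}{1-a}+\min(m,n)\big]\sqrt{|v_n|}$, $m,n\in\mathbb{N}$. If $K'$, regarded as an operator on $\ell^2(\mathbb{N})$, satisfies $\|K'\|\le1$, then $\sigma_{\mathrm d}(J_a+V)=\emptyset$. Equivalently (the two conditions being equivalent), if $|V|\le-\Delta_a$ in the sense of quadratic forms, then $\sigma_{\mathrm d}(J_a+V)=\emptyset$.
   Context: $\mathbb{N}=\{1,2,\dots\}$. For $a\in\mathbb{C}$, $J_a$ is the operator on $\ell^2(\mathbb{N})$ with $(J_a\psi)_1=a\psi_1+\psi_2$ and $(J_a\psi)_n=\psi_{n-1}+\psi_{n+1}$ for $n\ge2$; $-\Delta_a:=2-J_a$; $|V|=\mathrm{diag}(|v_1|,|v_2|,\dots)$. $\sigma_{\mathrm d}$ denotes the discrete spectrum (isolated eigenvalues of finite algebraic multiplicity). *)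

From Stdlib Require Import Reals Lra.
From Coquelicot Require Import Coquelicot.

Open Scope R_scope.

(* Indexing convention: the paper's index n in {1,2,...} is our index n-1 in nat. *)

Fixpoint csum (N : nat) (f : nat -> C) : C :=
  match N with O => RtoC 0 | S k => Cplus (csum k f) (f k) end.
Fixpoint rsum (N : nat) (f : nat -> R) : R :=
  match N with O => 0 | S k => rsum k f + f k end.

Definition in_l2 (psi : nat -> C) : Prop :=
  ex_series (fun n => (Cmod (psi n)) ^ 2).

Definition JV (a : R) (v : nat -> C) (psi : nat -> C) : nat -> C :=
  fun n => match n with
  | O => Cplus (Cplus (Cmult (RtoC a) (psi O)) (psi 1%nat)) (Cmult (v O) (psi O))
  | S k => Cplus (Cplus (psi k) (psi (S (S k)))) (Cmult (v (S k)) (psi (S k)))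
  end.

(* Generic operator given by its action on sequences, with maximal domain
   dom T = { psi in l^2 : T psi in l^2 }. *)
Definition in_dom (T : (nat -> C) -> (nat -> C)) (psi : nat -> C) : Prop :=
  in_l2 psi /\ in_l2 (T psi).

Definition shift_op (T : (nat -> C) -> (nat -> C)) (z : C) (psi : nat -> C) : nat -> C :=
  fun n => Cminus (T psi n) (Cmult z (psi n)).

(* z in the resolvent set: T - z is a bijection from dom T onto l^2
   (the inverse is then bounded by the closed graph theorem). *)
Definition in_resolvent (T : (nat -> C) -> (nat -> C)) (z : C) : Prop :=
  forall phi, in_l2 phi ->
    exists psi, in_dom T psi /\ (forall n, shift_op T z psi n = phi n) /\
      forall psi', in_dom T psi' -> (forall n, shift_op T z psi' n = phi n) ->
        forall n, psi' n = psi n.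

Definition in_spectrum T z : Prop := ~ in_resolvent T z.

Definition is_eigenvalue (T : (nat -> C) -> (nat -> C)) (z : C) : Prop :=
  exists psi, in_dom T psi /\ (exists n, psi n <> RtoC 0) /\
    forall n, T psi n = Cmult z (psi n).

Definition isolated_in_spectrum T (z : C) : Prop :=
  in_spectrum T z /\
  exists eps, 0 < eps /\
    forall w, 0 < Cmod (Cminus w z) < eps -> in_resolvent T w.

Definition in_gen_eigenspace T (z : C) (psi : nat -> C) : Prop :=
  exists k : nat,
    (forall j, (j <= k)%nat -> in_l2 (Nat.iter j (shift_op T z) psi)) /\
    forall n, Nat.iter k (shift_op T z) psi n = RtoC 0.

Definition finite_alg_mult T (z : C) : Prop :=
  exists (N : nat) (b : nat -> nat -> C),
    forall psi, in_gen_eigenspace T z psi ->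
      exists c : nat -> C, forall n, psi n = csum N (fun i => Cmult (c i) (b i n)).

Definition in_discrete_spectrum T (z : C) : Prop :=
  is_eigenvalue T z /\ isolated_in_spectrum T z /\ finite_alg_mult T z.

(* Matrix K' (0-based indices: paper's (m,n) = our (m+1,n+1)). *)
Definition Kp (a : R) (v : nat -> C) (m n : nat) : R :=
  sqrt (Cmod (v m)) * (a / (1 - a) + INR (S (Nat.min m n))) * sqrt (Cmod (v n)).

(* ||K'|| <= 1 as an operator on l^2(N): on finitely supported vectors
   (supported in the first N coordinates), ||K' psi||^2 <= ||psi||^2
   (the row truncation M is arbitrary). *)
Definition Kp_norm_le1 (a : R) (v : nat -> C) : Prop :=
  forall (psi : nat -> C) (N M : nat),
    rsum M (fun m => (Cmod (csum N (fun k => Cmult (RtoC (Kp a v m k)) (psi k)))) ^ 2)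
    <= rsum N (fun k => (Cmod (psi k)) ^ 2).

(* Testing K' on unit vectors shows |v_n| <= 1 and sum_n |v_n| < oo. Write z = k + 1/k with
   0 < |k| <= 1.

   If |k| = 1 then z lies in [-2, 2], and every real w with |w| < 2 is in the spectrum:
   (J_a + V - w) psi = delta_0 has no l^2 solution, because the positive definite form
   |psi_(n+1)|^2 + |psi_n|^2 - w Re (psi_(n+1) conj psi_n) is conserved by the free recurrence,
   so along the perturbed one it can shrink at most by the factor exp (C sum_n |v_n|), while it
   tends to 0. Hence z is not isolated.

   If |k| < 1, an eigenvector satisfies psi = G (-V psi) with the Green function G of J_a - z,
   and |G(n, j)| <= |k| (a/(1-a) + min(n, j)). So phi = |V|^(1/2) |psi| satisfies
   phi <= |k| K' phi, and ||K'|| <= 1 with |k| < 1 forces phi = 0, hence psi = 0. *)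

From Stdlib Require Import Reals Lra Lia Classical.
From Coquelicot Require Import Coquelicot.

Open Scope R_scope.

Lemma rsum_nonneg N f : (forall n, 0 <= f n) -> 0 <= rsum N f.
Proof. intros Hf; induction N as [|N IH]; simpl; [lra | specialize (Hf N); lra]. Qed.

Lemma rsum_le N f g : (forall n, (n < N)%nat -> f n <= g n) -> rsum N f <= rsum N g.
Proof.
  induction N as [|N IH]; intros Hfg; simpl; [lra |].
  assert (f N <= g N) by (apply Hfg; lia).
  assert (rsum N f <= rsum N g) by (apply IH; intros; apply Hfg; lia).
  lra.
Qed.

Lemma rsum_ext N f g : (forall n, (n < N)%nat -> f n = g n) -> rsum N f = rsum N g.
Proof.
  intros Hfg; apply Rle_antisym; apply rsum_le; intros n Hn; rewrite (Hfg n Hn); lra.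
Qed.

Lemma rsum_zero N f : (forall n, (n < N)%nat -> f n = 0) -> rsum N f = 0.
Proof.
  induction N as [|N IH]; intros Hf; simpl; [reflexivity |].
  rewrite IH, Hf; [ring | lia | intros; apply Hf; lia].
Qed.

Lemma rsum_scal N c f : rsum N (fun n => c * f n) = c * rsum N f.
Proof. induction N as [|N IH]; simpl; [ring | rewrite IH; ring]. Qed.

Lemma rsum_plus N f g : rsum N (fun n => f n + g n) = rsum N f + rsum N g.
Proof. induction N as [|N IH]; simpl; [ring | rewrite IH; ring]. Qed.

Lemma rsum_const N c : rsum N (fun _ => c) = INR N * c.
Proof. induction N as [|N IH]; simpl rsum; [simpl; ring | rewrite IH, S_INR; ring]. Qed.

Lemma rsum_add_range N t f : rsum (N + t) f = rsum N f + rsum t (fun i => f (N + i)%nat).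
Proof.
  induction t as [|t IH]; simpl; [rewrite Nat.add_0_r; ring |].
  rewrite Nat.add_succ_r; simpl; rewrite IH; ring.
Qed.

Lemma rsum_term_le N f m : (forall n, 0 <= f n) -> (m < N)%nat -> f m <= rsum N f.
Proof.
  intros Hf Hm.
  replace N with (S m + (N - S m))%nat by lia.
  rewrite rsum_add_range; simpl.
  assert (0 <= rsum m f) by (apply rsum_nonneg; auto).
  assert (0 <= rsum (N - S m) (fun i => f (S (m + i)))) by (apply rsum_nonneg; auto).
  lra.
Qed.

Lemma rsum_lub f B : (forall N, rsum N f <= B) ->
  exists X, (forall N, rsum N f <= X) /\ (forall Y, (forall N, rsum N f <= Y) -> X <= Y).
Proof.
  intros HB.
  destruct (completeness (fun x => exists N, x = rsum N f)) as [X [HX1 HX2]].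
  - exists B; intros x [N ->]; apply HB.
  - exists 0, 0%nat; reflexivity.
  - exists X; split.
    + intros N; apply HX1; eauto.
    + intros Y HY; apply HX2; intros x [N ->]; apply HY.
Qed.

Lemma rsum_S_sum_f_R0 N f : rsum (S N) f = sum_f_R0 f N.
Proof. induction N as [|N IH]; [simpl; ring | cbn [rsum] in *; rewrite IH; reflexivity]. Qed.

Lemma in_l2_bounded psi : in_l2 psi -> exists B, forall n, Cmod (psi n) <= B.
Proof.
  intros [l Hl]; apply is_series_Reals in Hl.
  exists (sqrt l); intros n.
  rewrite <- (sqrt_pow2 (Cmod (psi n))) by apply Cmod_ge_0.
  apply sqrt_le_1_alt, Rle_trans with (rsum (S n) (fun n => Cmod (psi n) ^ 2)).
  - apply (rsum_term_le _ (fun n => Cmod (psi n) ^ 2)); [intros; apply pow2_ge_0 | lia].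
  - rewrite rsum_S_sum_f_R0; apply sum_incr; [exact Hl | intros; apply pow2_ge_0].
Qed.

Lemma le_0_of_le_lim_0 (x : R) (u : nat -> R) :
  is_lim_seq u 0 -> (forall t, x <= u t) -> x <= 0.
Proof.
  intros Hu Hx.
  exact (is_lim_seq_le (fun _ => x) u x 0 Hx (is_lim_seq_const x) Hu).
Qed.

Lemma pow_le1 x n : 0 <= x <= 1 -> x ^ n <= 1.
Proof. intros Hx; rewrite <- (pow1 n); apply pow_incr; lra. Qed.

Lemma pow_le_pow_le1 x m n : 0 <= x <= 1 -> (m <= n)%nat -> x ^ n <= x ^ m.
Proof.
  intros Hx Hmn; replace n with (m + (n - m))%nat by lia; rewrite pow_add.
  assert (0 <= x ^ m) by (apply pow_le; lra).
  assert (x ^ (n - m) <= 1) by (apply pow_le1; lra).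
  nra.
Qed.

Lemma le_0_of_le_geom (x K c : R) : 0 <= c < 1 -> (forall t, x <= K * c ^ t) -> x <= 0.
Proof.
  intros Hc Hx; apply (le_0_of_le_lim_0 x (fun t => K * c ^ t)); [| exact Hx].
  replace 0 with (K * 0) by ring.
  apply is_lim_seq_mult'; [apply is_lim_seq_const | apply is_lim_seq_geom].
  rewrite Rabs_right; lra.
Qed.

Lemma sqr_le_of_le_mul x c Y E : 0 <= x -> 0 < c < 1 -> 0 <= Y -> 0 <= E -> x <= c * (Y + E) ->
  x ^ 2 <= c * Y ^ 2 + c ^ 2 / (1 - c) * E ^ 2.
Proof.
  intros Hx Hc HY HE H.
  assert (x ^ 2 <= (c * (Y + E)) ^ 2) by (apply pow_incr; lra).
  assert (c * Y ^ 2 + c ^ 2 / (1 - c) * E ^ 2 - (c * (Y + E)) ^ 2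
          = c / (1 - c) * ((1 - c) * Y - c * E) ^ 2) by (field; lra).
  assert (0 <= c / (1 - c) * ((1 - c) * Y - c * E) ^ 2).
  { apply Rmult_le_pos; [apply Rdiv_le_0_compat; lra | apply pow2_ge_0]. }
  lra.
Qed.

Definition Kp_coef (a : R) (p : nat) : R := a / (1 - a) + INR (S p).

Lemma Kp_coef_ge1 a p : 0 <= a < 1 -> 1 <= Kp_coef a p.
Proof.
  intros Ha; unfold Kp_coef; rewrite S_INR.
  assert (0 <= a / (1 - a)) by (apply Rdiv_le_0_compat; lra).
  assert (0 <= INR p) by apply pos_INR.
  lra.
Qed.

Lemma Kp_coef_le a p q : (p <= q)%nat -> Kp_coef a p <= Kp_coef a q.
Proof. intros Hpq; unfold Kp_coef; apply Rplus_le_compat_l, le_INR; lia. Qed.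

Section KpBounds.
Variables (a : R) (v : nat -> C).
Hypothesis Ha : 0 <= a < 1.

Lemma Kp_nonneg m n : 0 <= Kp a v m n.
Proof.
  assert (1 <= Kp_coef a (Nat.min m n)) by (apply Kp_coef_ge1; auto).
  unfold Kp; fold (Kp_coef a (Nat.min m n)).
  apply Rmult_le_pos; [apply Rmult_le_pos |]; try apply sqrt_pos; lra.
Qed.

Lemma Kp_sqr_ge m n : Cmod (v m) * Cmod (v n) <= Kp a v m n ^ 2.
Proof.
  assert (1 <= Kp_coef a (Nat.min m n)) by (apply Kp_coef_ge1; auto).
  assert (0 <= Cmod (v m)) by apply Cmod_ge_0.
  assert (0 <= Cmod (v n)) by apply Cmod_ge_0.
  unfold Kp; fold (Kp_coef a (Nat.min m n)).
  rewrite !Rpow_mult_distr, !pow2_sqrt by apply Cmod_ge_0.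
  assert (0 <= Cmod (v m) * Cmod (v n)) by nra.
  assert (1 <= Kp_coef a (Nat.min m n) ^ 2) by nra.
  nra.
Qed.

Hypothesis HK : Kp_norm_le1 a v.

Lemma Kp_norm_le1_real (phi : nat -> R) N M :
  rsum M (fun m => rsum N (fun j => Kp a v m j * phi j) ^ 2) <= rsum N (fun j => phi j ^ 2).
Proof.
  assert (Hsum : forall m, csum N (fun j => Cmult (RtoC (Kp a v m j)) (RtoC (phi j)))
                           = RtoC (rsum N (fun j => Kp a v m j * phi j))).
  { intros m; induction N as [|N IH]; simpl; [reflexivity |].
    rewrite IH; unfold RtoC, Cplus, Cmult; simpl; f_equal; ring. }
  assert (H := HK (fun j => RtoC (phi j)) N M); cbv beta in H.
  erewrite rsum_ext, (rsum_ext N) in H; [exact H | |];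
    intros; rewrite ?Hsum, Cmod_R, pow2_abs; reflexivity.
Qed.

Lemma Kp_col_sqr_sum_le1 k M : rsum M (fun m => Kp a v m k ^ 2) <= 1.
Proof.
  set (e := fun j => if Nat.eqb j k then 1 else 0).
  assert (He : forall j, (j < k)%nat -> e j = 0).
  { intros j Hj; unfold e; rewrite (proj2 (Nat.eqb_neq j k)) by lia; reflexivity. }
  assert (Hek : e k = 1) by (unfold e; rewrite Nat.eqb_refl; reflexivity).
  assert (H := Kp_norm_le1_real e (S k) M); cbn [rsum] in H.
  rewrite (rsum_zero k (fun j => e j ^ 2)), Hek in H by
    (intros j Hj; rewrite He by exact Hj; ring).
  rewrite (rsum_ext M _ (fun m => Kp a v m k ^ 2)) in H; [lra |].
  intros m _; cbn [rsum].
  rewrite (rsum_zero k (fun j => Kp a v m j * e j)) by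
    (intros j Hj; rewrite He by exact Hj; ring).
  ring.
Qed.

Lemma Kp_norm_le1_v_le1 n : Cmod (v n) <= 1.
Proof.
  assert (Kp a v n n ^ 2 <= 1).
  { apply Rle_trans with (rsum (S n) (fun m => Kp a v m n ^ 2)).
    - apply (rsum_term_le (S n) (fun m => Kp a v m n ^ 2)); [intros; apply pow2_ge_0 | lia].
    - apply Kp_col_sqr_sum_le1. }
  assert (Cmod (v n) * Cmod (v n) <= Kp a v n n ^ 2) by apply Kp_sqr_ge.
  assert (0 <= Cmod (v n)) by apply Cmod_ge_0.
  nra.
Qed.

Lemma Kp_norm_le1_v_summable : exists S, forall M, rsum M (fun m => Cmod (v m)) <= S.
Proof.
  destruct (classic (exists k, 0 < Cmod (v k))) as [[k Hk] | Hv0].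
  - exists (/ Cmod (v k)); intros M.
    apply Rmult_le_reg_l with (Cmod (v k)); [exact Hk |].
    rewrite Rinv_r, <- rsum_scal by lra.
    apply Rle_trans with (rsum M (fun m => Kp a v m k ^ 2)); [| apply Kp_col_sqr_sum_le1].
    apply rsum_le; intros m _; rewrite Rmult_comm; apply Kp_sqr_ge.
  - exists 0; intros M.
    rewrite (rsum_ext M _ (fun _ => 0 * 0)), rsum_scal; [lra |].
    intros m _; assert (Hm0 : 0 <= Cmod (v m)) by apply Cmod_ge_0.
    destruct (Rle_lt_or_eq_dec _ _ Hm0) as [Hm | Hm]; [exfalso; eauto | lra].
Qed.

End KpBounds.

Lemma Re_mul_conj_le x y : Rabs (Re (y * Cconj x)) <= Cmod x * Cmod y.
Proof.
  eapply Rle_trans; [apply re_le_Cmod |].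
  rewrite Cmod_mult, Cmod_conj; lra.
Qed.

Lemma mul_le_abs_mul w r b : Rabs r <= b -> w * r <= Rabs w * b.
Proof.
  intros Hr; eapply Rle_trans; [apply Rle_abs |].
  rewrite Rabs_mult; apply Rmult_le_compat_l; [apply Rabs_pos | exact Hr].
Qed.

Definition free_form (w : R) (x y : C) : R :=
  Cmod x ^ 2 + Cmod y ^ 2 - w * Re (y * Cconj x).

Lemma free_form_invariant w x y : free_form w y (RtoC w * y - x) = free_form w x y.
Proof.
  unfold free_form; rewrite !Cmod2_alt.
  destruct x as [x1 x2], y as [y1 y2]; unfold Re, Im; simpl; ring.
Qed.

Lemma free_form_sub_le w x y d :
  free_form w x (y - d) <= free_form w x y + Cmod d * (2 * Cmod y + Cmod d + Rabs w * Cmod x).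
Proof.
  assert (E : free_form w x (y - d)
              = free_form w x y - 2 * Re (d * Cconj y) + Cmod d ^ 2 + w * Re (d * Cconj x)).
  { unfold free_form; rewrite !Cmod2_alt.
    destruct x as [x1 x2], y as [y1 y2], d as [d1 d2]; unfold Re, Im; simpl; ring. }
  assert (H1 := Re_mul_conj_le y d).
  assert (H2 := mul_le_abs_mul w _ _ (Re_mul_conj_le x d)).
  assert (- Re (d * Cconj y) <= Rabs (Re (d * Cconj y))) by (rewrite <- Rabs_Ropp; apply Rle_abs).
  rewrite E; nra.
Qed.

Lemma free_form_ge w x y : (1 - Rabs w / 2) * (Cmod x ^ 2 + Cmod y ^ 2) <= free_form w x y.
Proof.
  unfold free_form.
  assert (H := mul_le_abs_mul w _ _ (Re_mul_conj_le x y)).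
  assert (0 <= Rabs w) by apply Rabs_pos.
  assert (0 <= (Cmod x - Cmod y) ^ 2) by apply pow2_ge_0.
  nra.
Qed.

Section FreeFormBounds.
Variable w : R.
Hypothesis Hw : Rabs w < 2.

Lemma free_form_le x y : free_form w x y <= 2 * (Cmod x ^ 2 + Cmod y ^ 2).
Proof.
  unfold free_form.
  assert (H := mul_le_abs_mul (- w) _ _ (Re_mul_conj_le x y)).
  rewrite Rabs_Ropp in H.
  assert (0 <= Rabs w) by apply Rabs_pos.
  assert (0 <= Cmod x * Cmod y) by (apply Rmult_le_pos; apply Cmod_ge_0).
  assert (0 <= (Cmod x - Cmod y) ^ 2) by apply pow2_ge_0.
  nra.
Qed.

Lemma free_form_step x y u : Cmod u <= 1 ->
  free_form w y (RtoC w * y - x - u * y)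
  <= (1 + 8 / (1 - Rabs w / 2) * Cmod u) * free_form w x y.
Proof.
  intros Hu.
  set (c := 1 - Rabs w / 2); assert (Hc : 0 < c) by (unfold c; lra).
  eapply Rle_trans; [apply free_form_sub_le |]; rewrite free_form_invariant.
  assert (Hwy : Cmod (RtoC w * y - x) <= 2 * Cmod y + Cmod x).
  { unfold Cminus; eapply Rle_trans; [apply Cmod_triangle |].
    rewrite Cmod_opp, Cmod_mult, Cmod_R.
    assert (0 <= Cmod y) by apply Cmod_ge_0; nra. }
  assert (Hge := free_form_ge w x y); fold c in Hge.
  assert (0 <= Cmod x) by apply Cmod_ge_0.
  assert (0 <= Cmod y) by apply Cmod_ge_0.
  assert (0 <= Cmod u) by apply Cmod_ge_0.
  assert (0 <= Rabs w) by apply Rabs_pos.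
  assert (Hpert : Cmod (u * y) * (2 * Cmod (RtoC w * y - x) + Cmod (u * y) + Rabs w * Cmod y)
               <= 8 * Cmod u * (Cmod x ^ 2 + Cmod y ^ 2)).
  { rewrite Cmod_mult.
    assert (0 <= (Cmod x - Cmod y) ^ 2) by apply pow2_ge_0.
    assert (Cmod u * Cmod y <= Cmod y) by nra.
    assert (Cmod u * Cmod y * (2 * Cmod (RtoC w * y - x) + Cmod u * Cmod y + Rabs w * Cmod y)
            <= Cmod u * Cmod y * (7 * Cmod y + 2 * Cmod x)).
    { apply Rmult_le_compat_l; [nra | nra]. }
    nra. }
  assert (8 * Cmod u * (Cmod x ^ 2 + Cmod y ^ 2) <= 8 / c * Cmod u * free_form w x y).
  { replace (8 / c * Cmod u * free_form w x y) with (8 * Cmod u * (free_form w x y / c))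
      by (field; lra).
    apply Rmult_le_compat_l; [lra |].
    apply Rmult_le_reg_l with c; [exact Hc |]; field_simplify; lra. }
  lra.
Qed.

Lemma free_form_nonneg x y : 0 <= free_form w x y.
Proof.
  eapply Rle_trans; [| apply free_form_ge].
  apply Rmult_le_pos; [lra |]; apply Rplus_le_le_0_compat; apply pow2_ge_0.
Qed.

Lemma free_form_nonpos_eq_0 x y : free_form w x y <= 0 -> y = 0%C.
Proof.
  intros HQ.
  assert (Hge := free_form_ge w x y).
  assert (0 <= Cmod x ^ 2) by apply pow2_ge_0.
  assert (Cmod y ^ 2 <= 0) by nra.
  assert (0 <= Cmod y) by apply Cmod_ge_0.
  apply Cmod_eq_0; nra.
Qed.

Lemma free_form_l2_lim_0 psi : in_l2 psi -> is_lim_seq (fun n => free_form w (psi (S n)) (psi n)) 0.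
Proof.
  intros Hl.
  assert (Hpsi : is_lim_seq (fun n => Cmod (psi n) ^ 2) 0) by (apply ex_series_lim_0, Hl).
  apply (is_lim_seq_le_le (fun _ => 0) _ (fun n => 2 * (Cmod (psi (S n)) ^ 2 + Cmod (psi n) ^ 2))).
  - intros n; split; [apply free_form_nonneg | apply free_form_le].
  - apply is_lim_seq_const.
  - replace (Finite 0) with (Finite (2 * (0 + 0))) by (f_equal; ring).
    apply is_lim_seq_mult'; [apply is_lim_seq_const |].
    apply is_lim_seq_plus'; [apply (is_lim_seq_incr_1 (fun n => Cmod (psi n) ^ 2)) |]; exact Hpsi.
Qed.

End FreeFormBounds.

Lemma le_exp_rsum_mul (Q α : nat -> R) :
  (forall n, 0 <= Q n) -> (forall n, Q n <= (1 + α n) * Q (S n)) ->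
  forall N t, Q N <= exp (rsum t (fun i => α (N + i)%nat)) * Q (N + t)%nat.
Proof.
  intros HQ Hstep N t; induction t as [|t IH].
  - rewrite Nat.add_0_r; simpl; rewrite exp_0; lra.
  - eapply Rle_trans; [exact IH |]; simpl rsum; rewrite exp_plus, Rmult_assoc.
    apply Rmult_le_compat_l; [left; apply exp_pos |].
    rewrite Nat.add_succ_r.
    eapply Rle_trans; [apply Hstep |].
    apply Rmult_le_compat_r; [apply HQ | apply exp_ineq1_le].
Qed.

Lemma l2_solution_zero (w Sv : R) (v psi : nat -> C) :
  Rabs w < 2 -> (forall n, Cmod (v n) <= 1) ->
  (forall M, rsum M (fun m => Cmod (v m)) <= Sv) -> in_l2 psi ->
  (forall n, psi n + psi (S (S n)) + v (S n) * psi (S n) - RtoC w * psi (S n) = 0)%C ->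
  forall n, psi n = 0%C.
Proof.
  intros Hw Hv HSv Hl Hrec.
  set (Q := fun n => free_form w (psi (S n)) (psi n)).
  set (C0 := 8 / (1 - Rabs w / 2)).
  assert (HC0 : 0 <= C0) by (apply Rdiv_le_0_compat; lra).
  assert (HQ0 : forall n, 0 <= Q n) by (intros n; apply free_form_nonneg, Hw).
  assert (Hstep : forall n, Q n <= (1 + C0 * Cmod (v (S n))) * Q (S n)).
  { intros n; unfold Q.
    replace (psi n) with (RtoC w * psi (S n) - psi (S (S n)) - v (S n) * psi (S n))%C.
    - apply free_form_step; auto.
    - transitivity (psi n - (psi n + psi (S (S n)) + v (S n) * psi (S n)
                             - RtoC w * psi (S n)))%C; [ring | rewrite Hrec; ring]. }
  set (E := exp (C0 * Sv)).
  assert (HE : forall N t, Q N <= E * Q (N + t)%nat).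
  { intros N t; eapply Rle_trans; [apply (le_exp_rsum_mul Q _ HQ0 Hstep) |].
    apply Rmult_le_compat_r; [apply HQ0 |].
    assert (Hle : rsum t (fun i => C0 * Cmod (v (S (N + i)))) <= C0 * Sv).
    { assert (0 <= rsum (S N) (fun m => Cmod (v m)))
        by (apply rsum_nonneg; intros; apply Cmod_ge_0).
      assert (Htail := HSv (S N + t)%nat); rewrite rsum_add_range in Htail; cbn [Nat.add] in Htail.
      rewrite rsum_scal; apply Rmult_le_compat_l; lra. }
    unfold E.
    destruct (Rle_lt_or_eq_dec _ _ Hle) as [Hlt | ->]; [left; apply exp_increasing | ]; lra. }
  intros N; apply (free_form_nonpos_eq_0 w Hw (psi (S N))).
  apply (le_0_of_le_lim_0 _ (fun t => E * Q (t + N)%nat)).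
  - replace 0 with (E * 0) by ring.
    apply is_lim_seq_mult'; [apply is_lim_seq_const |].
    apply (is_lim_seq_incr_n Q), free_form_l2_lim_0; assumption.
  - intros t; rewrite Nat.add_comm; apply HE.
Qed.

Definition delta0 (n : nat) : C := match n with O => 1%C | S _ => 0%C end.

Lemma delta0_in_l2 : in_l2 delta0.
Proof.
  apply ex_series_ext with (a := fun n => 0 ^ n).
  - intros [|n]; simpl; [rewrite Cmod_1 | rewrite Cmod_0]; ring.
  - apply ex_series_geom; rewrite Rabs_R0; lra.
Qed.

Section RealInterval.
Variables (a : R) (v : nat -> C).
Hypothesis Hv : forall n, Cmod (v n) <= 1.
Hypothesis Hsum : exists Sv, forall M, rsum M (fun m => Cmod (v m)) <= Sv.

Lemma JV_interval_in_spectrum (w : R) : Rabs w < 2 -> in_spectrum (JV a v) (RtoC w).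
Proof.
  intros Hw Hres.
  destruct Hsum as [Sv HSv].
  destruct (Hres delta0 delta0_in_l2) as [psi [[Hl _] [Heq _]]].
  assert (Hpsi := l2_solution_zero w Sv v psi Hw Hv HSv Hl (fun n => Heq (S n))).
  assert (E := Heq O); unfold shift_op, JV in E; rewrite !Hpsi in E.
  apply (f_equal fst) in E; simpl in E; lra.
Qed.

Lemma JV_interval_not_isolated (x : R) : -2 <= x <= 2 -> ~ isolated_in_spectrum (JV a v) (x, 0).
Proof.
  intros Hx [_ [eps [Heps Hres]]].
  set (d := Rmin (eps / 2) 1).
  assert (0 < d) by (apply Rmin_glb_lt; lra).
  assert (d <= eps / 2) by apply Rmin_l.
  assert (d <= 1) by apply Rmin_r.
  set (w := if Rle_dec 0 x then x - d else x + d).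
  assert (Hw : Rabs w < 2 /\ Rabs (w - x) = d).
  { unfold w; destruct (Rle_dec 0 x); split.
    - apply Rabs_def1; lra.
    - replace (x - d - x) with (- d) by ring; rewrite Rabs_Ropp; apply Rabs_right; lra.
    - apply Rabs_def1; lra.
    - replace (x + d - x) with d by ring; apply Rabs_right; lra. }
  apply (JV_interval_in_spectrum w); [apply Hw |].
  apply Hres.
  replace (Cminus (RtoC w) (x, 0)) with (RtoC (w - x))
    by (unfold RtoC, Cminus, Cplus, Copp; simpl; f_equal; ring).
  rewrite Cmod_R; lra.
Qed.

End RealInterval.

Lemma C_sqrt_exists (d : C) : exists s : C, (s * s)%C = d.
Proof.
  destruct d as [x y].
  set (m := sqrt (x ^ 2 + y ^ 2)).
  assert (Hm2 : m * m = x ^ 2 + y ^ 2) by (apply sqrt_sqrt; nra).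
  assert (Hm0 : 0 <= m) by apply sqrt_pos.
  assert (Hxm : - m <= x <= m) by (split; nra).
  set (p := sqrt ((m + x) / 2)); set (q := sqrt ((m - x) / 2)).
  assert (Hp : p * p = (m + x) / 2) by (apply sqrt_sqrt; lra).
  assert (Hq : q * q = (m - x) / 2) by (apply sqrt_sqrt; lra).
  assert (Hpq : p * q = Rabs y / 2).
  { unfold p, q; rewrite <- sqrt_mult by lra.
    replace ((m + x) / 2 * ((m - x) / 2)) with ((Rabs y / 2) ^ 2).
    - apply sqrt_pow2; assert (0 <= Rabs y) by apply Rabs_pos; lra.
    - replace ((Rabs y / 2) ^ 2) with (Rabs y ^ 2 / 4) by field.
      rewrite pow2_abs; nra. }
  destruct (Rle_or_lt 0 y) as [Hy | Hy].
  - exists (p, q); rewrite Rabs_right in Hpq by lra.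
    unfold Cmult; simpl; f_equal; nra.
  - exists (p, - q); rewrite Rabs_left in Hpq by lra.
    unfold Cmult; simpl; f_equal; nra.
Qed.

Lemma joukowski_inverse (z : C) : exists k : C, k <> 0%C /\ Cmod k <= 1 /\ z = (k + / k)%C.
Proof.
  assert (Htwo : RtoC 2 <> 0%C) by (intros E; injection E; lra).
  destruct (C_sqrt_exists (z * z - 4)) as [s Hs].
  assert (Hroots : forall k k', (k * k')%C = 1 -> (k + k')%C = z -> Cmod k <= 1 ->
                                exists k : C, k <> 0%C /\ Cmod k <= 1 /\ z = (k + / k)%C).
  { intros k k' Hkk' Hz Hk; exists k.
    assert (Hk0 : k <> 0%C) by (intros ->; rewrite Cmult_0_l in Hkk'; injection Hkk'; lra).
    split; [exact Hk0 | split; [exact Hk |]].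
    rewrite <- Hz; f_equal.
    rewrite <- (Cmult_1_l k'), <- (Cinv_l k Hk0), <- Cmult_assoc, Hkk'; ring. }
  set (k1 := ((z + s) / 2)%C); set (k2 := ((z - s) / 2)%C).
  assert (Hprod : (k1 * k2)%C = 1).
  { unfold k1, k2.
    replace ((z + s) / 2 * ((z - s) / 2))%C with ((z * z - s * s) / 4)%C
      by (field; exact Htwo).
    rewrite Hs; field; intros E; injection E; lra. }
  assert (Hsum : (k1 + k2)%C = z) by (unfold k1, k2; field; exact Htwo).
  assert (Hmod := f_equal Cmod Hprod); rewrite Cmod_mult, Cmod_1 in Hmod.
  destruct (Rle_or_lt (Cmod k1) 1) as [Hk1 | Hk1].
  - exact (Hroots k1 k2 Hprod Hsum Hk1).
  - apply (Hroots k2 k1); [rewrite Cmult_comm; exact Hprod | rewrite Cplus_comm; exact Hsum |].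
    assert (0 <= Cmod k2) by apply Cmod_ge_0; nra.
Qed.

Lemma joukowski_unit_circle (k : C) : Cmod k = 1 ->
  exists x, -2 <= x <= 2 /\ (k + / k)%C = (x, 0).
Proof.
  intros Hk; assert (Hk2 := Cmod2_alt k); rewrite Hk in Hk2.
  destruct k as [x y]; unfold Re, Im in Hk2; simpl in Hk2.
  exists (2 * x); split; [nra |].
  unfold Cinv, Cplus; simpl.
  replace (x * (x * 1) + y * (y * 1)) with 1 by nra.
  f_equal; field.
Qed.

(* With s = reg_sol, the Green function of J_a - z is G(n, j) = -k k^|n-j| s_min(n,j) / (1 - a k).
   Up to the factor -k / (1 - a k), green_lo f n and green_hi f n t are the parts j <= n and
   n < j <= n + t of the sum (G f)_n. *)
Fixpoint reg_sol (a : R) (k : C) (p : nat) : C :=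
  match p with
  | O => 1%C
  | S q => (k * k * reg_sol a k q + (1 - RtoC a * k))%C
  end.

Fixpoint green_lo (a : R) (k : C) (f : nat -> C) (n : nat) : C :=
  match n with
  | O => (reg_sol a k 0 * f O)%C
  | S m => (k * green_lo a k f m + reg_sol a k (S m) * f (S m))%C
  end.

Fixpoint green_hi (a : R) (k : C) (f : nat -> C) (n t : nat) : C :=
  match t with
  | O => 0%C
  | S t' => (green_hi a k f n t' + reg_sol a k n * k ^ (S t') * f (S n + t')%nat)%C
  end.

Section GreenRepresentation.
Variables (a : R) (k z : C) (v psi : nat -> C).
Hypothesis Hk0 : k <> 0%C.
Hypothesis Hz : z = (k + / k)%C.
Hypothesis Heig : forall n, JV a v psi n = (z * psi n)%C.
Let f n := (- (v n * psi n))%C.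

Lemma green_lo_rel n :
  (k * green_lo a k f n = k * reg_sol a k n * psi (S n) - reg_sol a k (S n) * psi n)%C.
Proof.
  assert (Hf0 : f O = (RtoC a * psi O + psi 1%nat - z * psi O)%C).
  { unfold f; rewrite <- (Heig O); simpl; ring. }
  assert (HfS : forall m, f (S m) = (psi m + psi (S (S m)) - z * psi (S m))%C).
  { intros m; unfold f; rewrite <- (Heig (S m)); simpl; ring. }
  induction n as [|n IH]; simpl green_lo; simpl reg_sol.
  - rewrite Hf0, Hz; field; exact Hk0.
  - rewrite Cmult_plus_distr_l, IH, HfS.
    simpl reg_sol; rewrite Hz; field; exact Hk0.
Qed.

Lemma green_hi_rel n t :
  (green_hi a k f n t + reg_sol a k n * k ^ t * (k * psi (n + t)%nat - psi (S (n + t))))%C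
  = (reg_sol a k n * (k * psi n - psi (S n)))%C.
Proof.
  induction t as [|t IH]; simpl green_hi.
  - rewrite Nat.add_0_r; simpl; ring.
  - rewrite <- IH, Nat.add_succ_r.
    replace (f (S (n + t))) with (psi (n + t)%nat + psi (S (S (n + t))) - z * psi (S (n + t)))%C
      by (unfold f; rewrite <- (Heig (S (n + t))); simpl; ring).
    simpl Cpow; rewrite Hz; field; exact Hk0.
Qed.

Lemma green_representation n t :
  ((1 - RtoC a * k) * psi n
   = - k * (green_lo a k f n + green_hi a k f n t
            + reg_sol a k n * k ^ t * (k * psi (n + t)%nat - psi (S (n + t)))))%C.
Proof.
  rewrite <- Cplus_assoc, green_hi_rel.
  transitivity (- (k * green_lo a k f n) - k * (reg_sol a k n * (k * psi n - psi (S n))))%C;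
    [rewrite green_lo_rel; simpl reg_sol | ]; ring.
Qed.

End GreenRepresentation.

Section GreenBounds.
Variables (a : R) (k : C).
Hypothesis Ha : 0 <= a < 1.
Hypothesis Hk1 : Cmod k < 1.

Let c0 := Cmod (1 - RtoC a * k)%C.

Lemma one_sub_mul_mod_ge : 1 - a <= c0.
Proof.
  assert (H := Cmod_triangle (1 - RtoC a * k)%C (RtoC a * k)%C).
  replace (1 - RtoC a * k + RtoC a * k)%C with (RtoC 1) in H by ring.
  rewrite Cmod_1, Cmod_mult, Cmod_R, Rabs_right in H by lra.
  fold c0 in H; nra.
Qed.

Lemma sub_mod_le_one_sub_mul_mod : Cmod (k - RtoC a)%C <= c0.
Proof.
  assert (Hk2 := Cmod2_alt k).
  assert (Cmod k ^ 2 < 1) by (assert (0 <= Cmod k) by apply Cmod_ge_0; nra).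
  assert (Hsq : Cmod (k - RtoC a)%C ^ 2 <= c0 ^ 2).
  { unfold c0; rewrite !Cmod2_alt.
    destruct k as [x y]; unfold Re, Im in *; simpl in *.
    assert (0 <= (1 - a * a) * (1 - (x * x + y * y))) by (apply Rmult_le_pos; nra).
    nra. }
  assert (0 <= c0) by apply Cmod_ge_0.
  assert (0 <= Cmod (k - RtoC a)%C) by apply Cmod_ge_0.
  nra.
Qed.

Lemma reg_sol_diff_le p : Cmod (reg_sol a k (S p) - reg_sol a k p)%C <= c0.
Proof.
  assert (0 <= Cmod k) by apply Cmod_ge_0.
  induction p as [|p IH].
  - simpl; replace (k * k * 1 + (1 - RtoC a * k) - 1)%C with (k * (k - RtoC a))%C by ring.
    rewrite Cmod_mult.
    assert (Hka := sub_mod_le_one_sub_mul_mod).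
    assert (0 <= Cmod (k - RtoC a)%C) by apply Cmod_ge_0.
    nra.
  - replace (reg_sol a k (S (S p)) - reg_sol a k (S p))%C
      with (k * k * (reg_sol a k (S p) - reg_sol a k p))%C by (simpl; ring).
    rewrite !Cmod_mult.
    assert (0 <= Cmod (reg_sol a k (S p) - reg_sol a k p)%C) by apply Cmod_ge_0.
    assert (Cmod k * Cmod k <= 1) by nra.
    nra.
Qed.

Lemma reg_sol_le p : Cmod (reg_sol a k p) <= c0 * Kp_coef a p.
Proof.
  assert (Hc := one_sub_mul_mod_ge).
  induction p as [|p IH].
  - simpl; rewrite Cmod_1; unfold Kp_coef; simpl INR.
    replace (c0 * (a / (1 - a) + 1)) with (c0 / (1 - a)) by (field; lra).
    apply Rmult_le_reg_l with (1 - a); [lra |]; field_simplify; lra.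
  - assert (H := Cmod_triangle (reg_sol a k p) (reg_sol a k (S p) - reg_sol a k p)%C).
    replace (reg_sol a k p + (reg_sol a k (S p) - reg_sol a k p))%C with (reg_sol a k (S p))
      in H by ring.
    assert (H2 := reg_sol_diff_le p).
    unfold Kp_coef in *; rewrite (S_INR (S p)); lra.
Qed.

Lemma green_lo_le f n :
  Cmod (green_lo a k f n) <= c0 * rsum (S n) (fun j => Kp_coef a j * Cmod (f j)).
Proof.
  rewrite <- rsum_scal.
  assert (Hs : forall j, Cmod (reg_sol a k j) * Cmod (f j) <= c0 * (Kp_coef a j * Cmod (f j))).
  { intros j; rewrite <- Rmult_assoc.
    apply Rmult_le_compat_r; [apply Cmod_ge_0 | apply reg_sol_le]. }
  induction n as [|n IH]; cbn [green_lo rsum].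
  - rewrite Cmod_mult; specialize (Hs O); lra.
  - eapply Rle_trans; [apply Cmod_triangle |]; rewrite !Cmod_mult.
    assert (0 <= Cmod (green_lo a k f n)) by apply Cmod_ge_0.
    assert (0 <= Cmod k) by apply Cmod_ge_0.
    assert (Cmod k * Cmod (green_lo a k f n) <= Cmod (green_lo a k f n)) by nra.
    specialize (Hs (S n)); cbn [rsum] in IH; lra.
Qed.

Lemma green_hi_le f n t :
  Cmod (green_hi a k f n t) <= c0 * Kp_coef a n * rsum t (fun i => Cmod (f (S n + i)%nat)).
Proof.
  assert (Hs := reg_sol_le n).
  assert (0 <= Cmod k) by apply Cmod_ge_0.
  induction t as [|t IH]; cbn [green_hi rsum].
  - rewrite Cmod_0; lra.
  - eapply Rle_trans; [apply Cmod_triangle |]; rewrite !Cmod_mult, Cmod_pow.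
    assert (Cmod k ^ S t <= 1) by (apply pow_le1; lra).
    assert (0 <= Cmod k ^ S t) by (apply pow_le; lra).
    assert (0 <= Cmod (f (S (n + t)))) by apply Cmod_ge_0.
    assert (0 <= Cmod (reg_sol a k n)) by apply Cmod_ge_0.
    assert (Cmod (reg_sol a k n) * Cmod k ^ S t * Cmod (f (S (n + t)))
            <= c0 * Kp_coef a n * Cmod (f (S (n + t)))).
    { apply Rmult_le_compat_r; [lra |]. nra. }
    simpl Nat.add in *; lra.
Qed.

Lemma green_boundary_le n t x y :
  Cmod (reg_sol a k n * k ^ t * (k * x - y))%C
  <= c0 * (Kp_coef a n * Cmod k ^ t * (Cmod x + Cmod y)).
Proof.
  rewrite !Cmod_mult, Cmod_pow.
  assert (Hxy : Cmod (k * x - y)%C <= Cmod x + Cmod y).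
  { unfold Cminus; eapply Rle_trans; [apply Cmod_triangle |].
    rewrite Cmod_opp, Cmod_mult.
    assert (0 <= Cmod x) by apply Cmod_ge_0; nra. }
  assert (Hs := reg_sol_le n).
  assert (0 <= Cmod k ^ t) by (apply pow_le, Cmod_ge_0).
  assert (0 <= Cmod (reg_sol a k n)) by apply Cmod_ge_0.
  assert (0 <= Cmod (k * x - y)%C) by apply Cmod_ge_0.
  replace (c0 * (Kp_coef a n * Cmod k ^ t * (Cmod x + Cmod y)))
    with (c0 * Kp_coef a n * Cmod k ^ t * (Cmod x + Cmod y)) by ring.
  apply Rmult_le_compat; [nra | lra | apply Rmult_le_compat_r; lra | lra].
Qed.

End GreenBounds.

Section EigenvectorBounds.
Variables (a : R) (k z : C) (v psi : nat -> C).
Hypothesis Ha : 0 <= a < 1.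
Hypothesis Hk0 : k <> 0%C.
Hypothesis Hk1 : Cmod k < 1.
Hypothesis Hz : z = (k + / k)%C.
Hypothesis Heig : forall n, JV a v psi n = (z * psi n)%C.

Lemma eigenvector_le n t :
  Cmod (psi n)
  <= Cmod k * (rsum (S n + t) (fun j => Kp_coef a (Nat.min n j) * Cmod (v j * psi j))
               + Kp_coef a n * Cmod k ^ t * (Cmod (psi (n + t)%nat) + Cmod (psi (S (n + t))))).
Proof.
  set (f := fun j => (- (v j * psi j))%C).
  set (c0 := Cmod (1 - RtoC a * k)%C).
  assert (Hc0 : 0 < c0) by (assert (H := one_sub_mul_mod_ge a k Ha Hk1); fold c0 in H; lra).
  assert (Hf : forall j, Cmod (f j) = Cmod (v j * psi j)) by (intros j; apply Cmod_opp).
  assert (Hk : 0 <= Cmod k) by apply Cmod_ge_0.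
  set (W := (reg_sol a k n * k ^ t * (k * psi (n + t)%nat - psi (S (n + t))))%C).
  set (bd := Kp_coef a n * Cmod k ^ t * (Cmod (psi (n + t)%nat) + Cmod (psi (S (n + t))))).
  assert (HW := green_boundary_le a k Ha Hk1 n t (psi (n + t)%nat) (psi (S (n + t))));
    fold c0 W bd in HW.
  assert (Hsplit : rsum (S n + t) (fun j => Kp_coef a (Nat.min n j) * Cmod (v j * psi j))
                   = rsum (S n) (fun j => Kp_coef a j * Cmod (f j))
                     + Kp_coef a n * rsum t (fun i => Cmod (f (S n + i)%nat))).
  { rewrite rsum_add_range, <- rsum_scal; f_equal; apply rsum_ext; intros j Hj; rewrite Hf.
    - rewrite Nat.min_r by lia; reflexivity.
    - rewrite Nat.min_l by lia; reflexivity. }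
  assert (HT := green_lo_le a k Ha Hk1 f n).
  assert (HU := green_hi_le a k Ha Hk1 f n t).
  fold c0 in HT, HU.
  assert (Hrep := f_equal Cmod (green_representation a k z v psi Hk0 Hz Heig n t)).
  rewrite !Cmod_mult, Cmod_opp in Hrep; fold f W c0 in Hrep.
  assert (Hsum := Cmod_triangle (green_lo a k f n + green_hi a k f n t) W).
  assert (Hsum' := Cmod_triangle (green_lo a k f n) (green_hi a k f n t)).
  apply Rmult_le_reg_l with c0; [exact Hc0 |].
  rewrite Hrep, Hsplit; fold bd.
  replace (c0 * (Cmod k * (rsum (S n) (fun j => Kp_coef a j * Cmod (f j))
                           + Kp_coef a n * rsum t (fun i => Cmod (f (S n + i)%nat)) + bd)))
    with (Cmod k * (c0 * rsum (S n) (fun j => Kp_coef a j * Cmod (f j))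
                    + c0 * Kp_coef a n * rsum t (fun i => Cmod (f (S n + i)%nat)) + c0 * bd))
    by ring.
  apply Rmult_le_compat_l; lra.
Qed.

Definition bs_vector (j : nat) : R := sqrt (Cmod (v j)) * Cmod (psi j).

Hypothesis HK : Kp_norm_le1 a v.

Lemma bs_vector_nonneg j : 0 <= bs_vector j.
Proof. apply Rmult_le_pos; [apply sqrt_pos | apply Cmod_ge_0]. Qed.

Lemma bs_vector_le n t :
  bs_vector n
  <= Cmod k * (rsum (S n + t) (fun j => Kp a v n j * bs_vector j)
               + Kp_coef a n * Cmod k ^ t * (Cmod (psi (n + t)%nat) + Cmod (psi (S (n + t))))).
Proof.
  assert (Hsv : 0 <= sqrt (Cmod (v n)) <= 1).
  { split; [apply sqrt_pos |]; rewrite <- sqrt_1; apply sqrt_le_1_alt.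
    exact (Kp_norm_le1_v_le1 a v Ha HK n). }
  set (bd := Kp_coef a n * Cmod k ^ t * (Cmod (psi (n + t)%nat) + Cmod (psi (S (n + t))))).
  assert (Hbd : 0 <= Cmod k * bd).
  { assert (1 <= Kp_coef a n) by (apply Kp_coef_ge1; exact Ha).
    assert (0 <= Cmod k) by apply Cmod_ge_0.
    assert (0 <= Cmod k ^ t) by (apply pow_le; lra).
    assert (0 <= Cmod (psi (n + t)%nat)) by apply Cmod_ge_0.
    assert (0 <= Cmod (psi (S (n + t)))) by apply Cmod_ge_0.
    unfold bd; apply Rmult_le_pos; [lra |]; apply Rmult_le_pos; [apply Rmult_le_pos |]; lra. }
  assert (Hrow : sqrt (Cmod (v n))
                 * rsum (S n + t) (fun j => Kp_coef a (Nat.min n j) * Cmod (v j * psi j))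
                 = rsum (S n + t) (fun j => Kp a v n j * bs_vector j)).
  { rewrite <- rsum_scal; apply rsum_ext; intros j _.
    unfold Kp, bs_vector; rewrite Cmod_mult, <- (sqrt_sqrt (Cmod (v j))) at 1 by apply Cmod_ge_0.
    unfold Kp_coef; ring. }
  apply Rle_trans with (sqrt (Cmod (v n)) * (Cmod k * (rsum (S n + t)
      (fun j => Kp_coef a (Nat.min n j) * Cmod (v j * psi j)) + bd))).
  - apply Rmult_le_compat_l; [lra | apply eigenvector_le].
  - rewrite <- Hrow; nra.
Qed.

Variable B : R.
Hypothesis HB : forall j, Cmod (psi j) <= B.

Lemma bs_vector_le_truncated N t n : (n < N)%nat ->
  bs_vector n
  <= Cmod k * (rsum (S (N + t)) (fun j => Kp a v n j * bs_vector j)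
               + Kp_coef a N * Cmod k ^ t * (2 * B)).
Proof.
  intros Hn; set (c := Cmod k); set (L := (N + t)%nat).
  assert (Hle := bs_vector_le n (L - n)).
  replace (S n + (L - n))%nat with (S L) in Hle by (unfold L; lia).
  replace (n + (L - n))%nat with L in Hle by (unfold L; lia).
  eapply Rle_trans; [exact Hle |]; fold c.
  assert (0 <= c < 1) by (split; [apply Cmod_ge_0 | exact Hk1]).
  apply Rmult_le_compat_l; [lra |]; apply Rplus_le_compat_l.
  assert (Hcn := Kp_coef_ge1 a n Ha).
  assert (Kp_coef a n <= Kp_coef a N) by (apply Kp_coef_le; lia).
  assert (c ^ (L - n) <= c ^ t) by (apply pow_le_pow_le1; [lra | unfold L; lia]).
  assert (0 <= c ^ (L - n)) by (apply pow_le; lra).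
  assert (HBL := HB L); assert (HBSL := HB (S L)).
  assert (0 <= Cmod (psi L)) by apply Cmod_ge_0.
  assert (0 <= Cmod (psi (S L))) by apply Cmod_ge_0.
  apply Rmult_le_compat; [nra | lra | apply Rmult_le_compat; lra | lra].
Qed.

Lemma bs_vector_rsum_le N t :
  rsum N (fun n => bs_vector n ^ 2)
  <= Cmod k * rsum (S (N + t)) (fun j => bs_vector j ^ 2)
     + INR N * (Cmod k ^ 2 / (1 - Cmod k)) * (Kp_coef a N * (2 * B)) ^ 2 * Cmod k ^ t.
Proof.
  set (c := Cmod k); assert (Hc : 0 < c < 1) by (split; [apply Cmod_gt_0 |]; assumption).
  set (Y := fun n => rsum (S (N + t)) (fun j => Kp a v n j * bs_vector j)).
  set (E := Kp_coef a N * c ^ t * (2 * B)).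
  assert (HcN := Kp_coef_ge1 a N Ha).
  assert (Hct : 0 <= c ^ t) by (apply pow_le; lra).
  assert (HB0 : 0 <= B) by (eapply Rle_trans; [apply Cmod_ge_0 | apply (HB O)]).
  assert (Hterm : forall n, (n < N)%nat ->
                   bs_vector n ^ 2 <= c * Y n ^ 2 + c ^ 2 / (1 - c) * E ^ 2).
  { intros n Hn; apply sqr_le_of_le_mul; [apply bs_vector_nonneg | exact Hc | | |
                                         apply bs_vector_le_truncated, Hn].
    - apply rsum_nonneg; intros j.
      apply Rmult_le_pos; [apply Kp_nonneg, Ha | apply bs_vector_nonneg].
    - unfold E; apply Rmult_le_pos; [apply Rmult_le_pos |]; lra. }
  assert (HY : rsum N (fun n => Y n ^ 2) <= rsum (S (N + t)) (fun j => bs_vector j ^ 2))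
    by apply Kp_norm_le1_real, HK.
  assert (HE2 : E ^ 2 <= (Kp_coef a N * (2 * B)) ^ 2 * c ^ t).
  { unfold E; replace ((Kp_coef a N * c ^ t * (2 * B)) ^ 2)
      with ((Kp_coef a N * (2 * B)) ^ 2 * (c ^ t * c ^ t)) by ring.
    apply Rmult_le_compat_l; [apply pow2_ge_0 |].
    assert (c ^ t <= 1) by (apply pow_le1; lra); nra. }
  assert (HK0 : 0 <= c ^ 2 / (1 - c)) by (apply Rdiv_le_0_compat; [apply pow2_ge_0 | lra]).
  assert (HN0 : 0 <= INR N) by apply pos_INR.
  eapply Rle_trans; [apply rsum_le, Hterm |].
  rewrite rsum_plus, rsum_scal, rsum_const.
  assert (INR N * (c ^ 2 / (1 - c) * E ^ 2)
          <= INR N * (c ^ 2 / (1 - c)) * ((Kp_coef a N * (2 * B)) ^ 2 * c ^ t)).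
  { rewrite Rmult_assoc; apply Rmult_le_compat_l; [lra |].
    apply Rmult_le_compat_l; [lra | exact HE2]. }
  nra.
Qed.

Lemma bs_vector_zero j : bs_vector j = 0.
Proof.
  set (c := Cmod k); assert (Hc : 0 < c < 1) by (split; [apply Cmod_gt_0 |]; assumption).
  destruct (Kp_norm_le1_v_summable a v Ha HK) as [Sv HSv].
  assert (Hbs2 : forall i, bs_vector i ^ 2 <= B ^ 2 * Cmod (v i)).
  { intros i; unfold bs_vector; rewrite Rpow_mult_distr, pow2_sqrt by apply Cmod_ge_0.
    assert (0 <= Cmod (v i)) by apply Cmod_ge_0.
    assert (Cmod (psi i) ^ 2 <= B ^ 2) by (apply pow_incr; split; [apply Cmod_ge_0 | apply HB]).
    nra. }
  destruct (rsum_lub (fun i => bs_vector i ^ 2) (B ^ 2 * Sv)) as [X [HX HXlub]].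
  { intros N; eapply Rle_trans; [apply rsum_le; intros i _; apply Hbs2 |].
    rewrite rsum_scal; apply Rmult_le_compat_l; [apply pow2_ge_0 | apply HSv]. }
  assert (HXc : X <= c * X).
  { apply HXlub; intros N.
    assert (rsum N (fun n => bs_vector n ^ 2) - c * X <= 0); [| lra].
    apply (le_0_of_le_geom _ (INR N * (c ^ 2 / (1 - c)) * (Kp_coef a N * (2 * B)) ^ 2) c);
      [lra |]; intros t.
    assert (Hrsum := bs_vector_rsum_le N t); fold c in Hrsum.
    assert (c * rsum (S (N + t)) (fun i => bs_vector i ^ 2) <= c * X)
      by (apply Rmult_le_compat_l; [lra | apply HX]).
    lra. }
  assert (Hj := rsum_term_le (S j) (fun i => bs_vector i ^ 2) j
                  (fun i => pow2_ge_0 _) (Nat.lt_succ_diag_r j)).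
  assert (HXj := HX (S j)).
  assert (X <= 0) by nra.
  assert (H0 := bs_vector_nonneg j).
  nra.
Qed.

Lemma eigenvector_zero n : psi n = 0%C.
Proof.
  set (c := Cmod k); assert (Hc : 0 < c < 1) by (split; [apply Cmod_gt_0 |]; assumption).
  assert (Hvpsi : forall j, Cmod (v j * psi j) = 0).
  { intros j; rewrite Cmod_mult, <- (sqrt_sqrt (Cmod (v j))) by apply Cmod_ge_0.
    rewrite Rmult_assoc; fold (bs_vector j); rewrite bs_vector_zero; ring. }
  apply Cmod_eq_0, Rle_antisym; [| apply Cmod_ge_0].
  apply (le_0_of_le_geom _ (c * Kp_coef a n * (2 * B)) c); [lra |]; intros t.
  eapply Rle_trans; [apply (eigenvector_le n t) |]; fold c.
  rewrite (rsum_zero _ (fun j => Kp_coef a (Nat.min n j) * Cmod (v j * psi j)))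
    by (intros j _; rewrite Hvpsi; ring).
  rewrite Rplus_0_l.
  assert (1 <= Kp_coef a n) by (apply Kp_coef_ge1; exact Ha).
  assert (0 <= c ^ t) by (apply pow_le; lra).
  assert (HBt := HB (n + t)); assert (HBSt := HB (S (n + t))).
  replace (c * Kp_coef a n * (2 * B) * c ^ t) with (c * (Kp_coef a n * c ^ t * (2 * B))) by ring.
  apply Rmult_le_compat_l; [lra |]; apply Rmult_le_compat_l; [nra | lra].
Qed.

End EigenvectorBounds.

Theorem theorem5p7 (a : R) (v : nat -> C) :
  0 <= a < 1 -> Kp_norm_le1 a v ->
  forall z : C, ~ in_discrete_spectrum (JV a v) z.
Proof.
  intros Ha HK z [[psi [[Hl _] [[n Hn] Heig]]] [Hiso _]].
  destruct (joukowski_inverse z) as [k [Hk0 [Hk1 Hz]]].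
  destruct (Rle_lt_or_eq_dec _ _ Hk1) as [Hlt | Hunit].
  - destruct (in_l2_bounded psi Hl) as [B HB].
    exact (Hn (eigenvector_zero a k z v psi Ha Hk0 Hlt Hz Heig HK B HB n)).
  - destruct (joukowski_unit_circle k Hunit) as [x [Hx Hkx]].
    rewrite Hkx in Hz; subst z.
    exact (JV_interval_not_isolated a v (Kp_norm_le1_v_le1 a v Ha HK)
             (Kp_norm_le1_v_summable a v Ha HK) x Hx Hiso).
Qed.
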